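(* Let $k$ be an algebraically closed field and $X\subset\mathbb P_k^{n-1}$ a smooth simplicial projective toric variety. Then $X$ is an ideal-theoretic complete intersection if and only if $X$ is the plane monomial curve defined parametrically by $x_1=t_1^2,\ x_2=t_2^2,\ x_3=t_1t_2$.
   Context: $e_1,\ldots,e_m$ is the canonical basis of $\mathbb Z^m$. For distinct nonzero $a_1,\ldots,a_n\in\mathbb N^m$, $I_{\mathcal A}\subset k[x_1,\ldots,x_n]$ is the kernel of $x_i\mapsto t^{a_i}=t_1^{a_{i1}}\cdots t_m^{a_{im}}$. A simplicial projective toric variety is $V(I_{\mathcal A})\subset\mathbb P^{n-1}_k$ where $n>m$, $a_l=de_l$ ($1\le l\le m$) for some $d\in\mathbb Z^+$, and each $a_i$, $i>m$, has coordinate sum $d$. A variety is an ideal-theoretic complete intersection if its defining ideal $I_{\mathcal A}$ is minimally generated by as many elements as its height $n-m$. The variety given parametrically by monomials $x_l=t^{b_l}$ is $V(I_{\{b_l\}})$ (up to permuting coordinates). *)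

From HB Require Import structures.
From mathcomp Require Import all_boot all_order all_algebra.
Set Implicit Arguments. Unset Strict Implicit. Unset Printing Implicit Defensive.
Import GRing.Theory.
Local Open Scope ring_scope.

(* Multivariate polynomials in n variables over k, represented as finite
   formal sums: a list of (coefficient, exponent vector) terms.  Two such
   lists denote the same polynomial iff they have the same coefficients. *)
Definition mon (n : nat) := {ffun 'I_n -> nat}.
Definition mpol (k : Type) (n : nat) := seq (k * mon n).

Section MPoly.
Variables (k : fieldType) (n : nat).

Definition mcoef (f : mpol k n) (al : mon n) : k :=
  \sum_(x <- f | x.2 == al) x.1.

Definition mpeq (f g : mpol k n) : Prop := forall al, mcoef f al = mcoef g al.
Definition mpzero (f : mpol k n) : Prop := forall al, mcoef f al = 0.

Definition mpadd (f g : mpol k n) : mpol k n := f ++ g.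
Definition mpmul (f g : mpol k n) : mpol k n :=
  [seq ((x.1 * y.1 : k), ([ffun i => (x.2 i + y.2 i)%N] : mon n)) | x : k * mon n <- f, y : k * mon n <- g].
Definition mpsum r (h : 'I_r -> mpol k n) : mpol k n :=
  flatten [seq h i | i <- enum 'I_r].

Definition mpeval (p : 'I_n -> k) (f : mpol k n) : k :=
  \sum_(x <- f) x.1 * \prod_(i < n) p i ^+ x.2 i.

Definition mpderiv (j : 'I_n) (f : mpol k n) : mpol k n :=
  [seq ((x.1 *+ x.2 j : k), ([ffun i => if i == j then (x.2 i).-1 else x.2 i] : mon n)) | x : k * mon n <- f].
End MPoly.

Section Toric.
Variables (k : fieldType) (n m : nat) (a : 'I_n -> mon m).

(* the k-algebra map x_i |-> t^{a_i} from k[x_1..x_n] to k[t_1..t_m] *)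
Definition monmap (f : mpol k n) : mpol k m :=
  [seq (x.1, ([ffun l => (\sum_(i < n) x.2 i * a i l)%N] : mon m)) | x : k * mon n <- f].

Definition inIA (f : mpol k n) : Prop := mpzero (monmap f).

Definition generates_IA r (g : 'I_r -> mpol k n) : Prop :=
  (forall i, inIA (g i)) /\
  forall f, inIA f -> exists h : 'I_r -> mpol k n,
      mpeq f (mpsum (fun i => mpmul (h i) (g i))).

(* ideal-theoretic complete intersection: I_A is minimally generated by
   height(I_A) = n - m elements *)
Definition ici : Prop :=
  (exists g : 'I_(n - m) -> mpol k n, generates_IA g) /\
  (forall r (g : 'I_r -> mpol k n), generates_IA g -> (n - m <= r)%N).

(* points of V(I_A) in P^{n-1}(k), in homogeneous coordinates *)
Definition inV (p : 'I_n -> k) : Prop :=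
  (exists i, p i != 0) /\ forall f, inIA f -> mpeval p f = 0.

Definition jacobian r (g : 'I_r -> mpol k n) (p : 'I_n -> k) : 'M[k]_(r, n) :=
  \matrix_(i < r, j < n) mpeval p (mpderiv j (g i)).

(* Smoothness of V(I_A) (Jacobian criterion): at every point of V(I_A) the
   Jacobian matrix of I_A has rank equal to the codimension n - m. *)
Definition smooth_V : Prop :=
  forall p, inV p ->
    (forall r (g : 'I_r -> mpol k n), (forall i, inIA (g i)) ->
        (\rank (jacobian g p) <= n - m)%N) /\
    (exists r (g : 'I_r -> mpol k n), (forall i, inIA (g i)) /\
        \rank (jacobian g p) = (n - m)%N).

Definition simplicial_proj_toric_data : Prop :=
  [/\ (m < n)%N, injective a, (forall i, a i != [ffun => 0%N]) &
      exists d : nat, [/\ (0 < d)%N,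
        (forall (i : 'I_n) (l : 'I_m), val i = val l ->
            forall l', a i l' = if l' == l then d else 0%N) &
        (forall i : 'I_n, (m <= i)%N -> (\sum_(l < m) a i l)%N = d)]].
End Toric.

(* exponents of the plane curve x1 = t1^2, x2 = t2^2, x3 = t1 t2 *)
Definition curveB (i : 'I_3) : mon 2 :=
  [ffun l : 'I_2 => match val i, val l with
                    | 0, 0 => 2%N | 1, 1 => 2%N | 2, _ => 1%N | _, _ => 0%N end].

From HB Require Import structures.
From mathcomp Require Import all_boot all_order all_algebra.
From mathcomp Require Import zify ring.
From Stdlib Require Import ClassicalEpsilon.
Set Implicit Arguments. Unset Strict Implicit. Unset Printing Implicit Defensive.
Import GRing.Theory.
Local Open Scope ring_scope.

(* Write img g = sum_i g_i a_i for the exponent map, so that I_A is spanned by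
   the binomials x^g - x^h with img g = img h; a_l = d e_l for l < m.
   1. Vertex points.  The coordinate point e_l (l < m) lies on X, and there the
      Jacobian column of any f in I_A along x_j vanishes unless j is a singular
      direction: some fibre of img through x_l^c x_j is not a singleton.  So
      smoothness gives at least n - m singular directions at each vertex.
   2. Counting generators.  For the least such c, x_l^c x_j is isolated (it
      shares no variable with its fibre-mates); binomials with isolated leading
      monomials in distinct fibres force as many generators, by a rank argument.
   3. If n - m >= 2, the singular directions at one vertex and one more at a
      second vertex give n - m + 1 such binomials: X is not a complete
      intersection.  If n - m = 1, the singular directions force m = 2 and the
      apex a_3 = (d/2, d/2): X is the conic, whose ideal is generated by
      x1 x2 - x3^2 (explicit reduction to a normal form).
   4. The main theorem combines these with m >= 2 (the a_i are distinct). *)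
Definition classicb (P : Prop) : bool :=
  if excluded_middle_informative P then true else false.

Lemma classicbP (P : Prop) : reflect P (classicb P).
Proof. by rewrite /classicb; case: excluded_middle_informative => H; constructor. Qed.

Lemma sum_vanish (k : fieldType) (X T : eqType) (f : seq X) (P : pred X)
    (phi : X -> T) (F : X -> k) :
  (forall y, y \in f -> P y -> \sum_(x <- f | P x && (phi x == phi y)) F x = 0) ->
  \sum_(x <- f | P x) F x = 0.
Proof.
move=> H; set U := undup [seq phi x | x <- f & P x].
transitivity (\sum_(x <- f | P x) \sum_(b <- U) (if phi x == b then F x else 0)).
  rewrite big_seq_cond [RHS]big_seq_cond; apply: eq_bigr => x /andP[xf Px].
  have xU : phi x \in U.
    by rewrite mem_undup; apply/mapP; exists x; rewrite ?mem_filter ?Px.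
  rewrite (bigD1_seq (phi x)) ?undup_uniq //= eqxx big1 ?addr0 // => b.
  by rewrite eq_sym => /negbTE ->.
rewrite exchange_big /=; apply: big1_seq => b /andP[_].
rewrite mem_undup => /mapP[y]; rewrite mem_filter => /andP[Py yf] ->.
by rewrite -big_mkcondr; exact: H.
Qed.

Lemma rank_le_support (k : fieldType) r n (J : 'M[k]_(r, n)) (B : {set 'I_n}) :
  (forall i j, j \notin B -> J i j = 0) -> (\rank J <= #|B|)%N.
Proof.
move=> HJ.
have -> : J = (\matrix_(i < r, t < #|B|) J i (enum_val t)) *m
              (\matrix_(t < #|B|, j < n) ((enum_val t == j)%:R : k)).
  apply/matrixP => i j; rewrite !mxE.
  under eq_bigr do rewrite !mxE.
  rewrite -(big_enum_val (fun x => J i x * (x == j)%:R)) /= big_mkcond /=.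
  rewrite (bigD1 j) //= eqxx mulr1 big1 ?addr0; first by case: ifP => // /negbT /HJ ->.
  by move=> x /negbTE xj; rewrite xj mulr0 if_same.
exact: mulmx_max_rank.
Qed.

Section Monomials.
Variable n : nat.

Definition madd (x y : mon n) : mon n := [ffun i => (x i + y i)%N].
Definition mscale c (x : mon n) : mon n := [ffun i => (c * x i)%N].
Definition mon0 : mon n := [ffun => 0%N].
Definition evec (j : 'I_n) : mon n := [ffun i => nat_of_bool (i == j)].
Definition dirmon (l : 'I_n) c j : mon n := madd (mscale c (evec l)) (evec j).
(* the exponent vector of x^g / x_i (truncated at 0) *)
Definition mdiv (g : mon n) i : mon n := [ffun x => g x - (x == i)]%N.

Lemma madd_mdiv (g : mon n) i : (0 < g i)%N -> madd (mdiv g i) (evec i) = g.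
Proof.
move=> gi; apply/ffunP => x; rewrite !ffunE.
by case: (eqVneq x i) => [->|_]; rewrite ?subn0 ?addn0 // subnK.
Qed.

Lemma sum_evec (j : 'I_n) : (\sum_(i < n) evec j i = 1)%N.
Proof. by rewrite (bigD1 j) //= ffunE eqxx big1 // => i /negbTE; rewrite ffunE => ->. Qed.

Lemma dirmon0 l j : dirmon l 0 j = evec j.
Proof. by apply/ffunP => i; rewrite !ffunE. Qed.

Lemma dirmon_l l c j : j != l -> dirmon l c j l = c.
Proof. by move=> jl; rewrite !ffunE eqxx eq_sym (negbTE jl) muln1 addn0. Qed.

Lemma dirmonS l c j : madd (dirmon l c j) (evec l) = dirmon l c.+1 j.
Proof. by apply/ffunP => x; rewrite !ffunE mulSn; lia. Qed.

Lemma sum_dirmon l c j : (\sum_(i < n) dirmon l c j i = c + 1)%N.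
Proof.
rewrite (eq_bigr (fun i => c * evec l i + evec j i)%N) => [|i _]; last by rewrite !ffunE.
by rewrite big_split /= -big_distrr /= !sum_evec muln1.
Qed.

Lemma mon_support (g : mon n) : g != mon0 -> exists i, (0 < g i)%N.
Proof.
move=> gn0; apply/existsP; apply: contraR gn0 => /existsPn g0.
by apply/eqP/ffunP => i; rewrite ffunE; move: (g0 i); rewrite lt0n negbK => /eqP.
Qed.

Lemma mdiv_ray_self (g : mon n) l : (0 < g l)%N ->
  (mdiv g l == mscale (mdiv g l l) (evec l)) = (g == mscale (g l) (evec l)).
Proof.
move=> gl; apply/eqP/eqP => E; apply/ffunP => i; move/(congr1 (fun f : mon n => f i)): E;
  rewrite !ffunE; case: (eqVneq i l) => [->|_]; rewrite ?eqxx ?muln1 ?muln0 //=; lia.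
Qed.

Lemma mdiv_ray_dir (g : mon n) l j : j != l -> (0 < g j)%N ->
  (mdiv g j == mscale (mdiv g j l) (evec l)) = (g == dirmon l (g l) j).
Proof.
move=> jl gj; have lj : l != j by rewrite eq_sym.
apply/eqP/eqP => E; apply/ffunP => i; move/(congr1 (fun f : mon n => f i)): E;
  rewrite !ffunE; case: (eqVneq i j) => [->|ij]; rewrite ?(negbTE jl) ?eqxx ?(negbTE ij) /=;
  try case: (eqVneq i l) => [->|?]; rewrite ?eqxx ?(negbTE lj) /=; lia.
Qed.

End Monomials.
Arguments mon0 {n}.

Section ExponentMap.
Variables (n m : nat) (a : 'I_n -> mon m).

(* The exponent map g |-> sum_i g_i a_i: the monomial x^g is sent to t^(img g). *)
Definition img (g : mon n) : mon m := [ffun l => (\sum_(i < n) g i * a i l)%N].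

Lemma imgD x y l : img (madd x y) l = (img x l + img y l)%N.
Proof. by rewrite !ffunE -big_split; apply: eq_bigr => i _; rewrite ffunE mulnDl. Qed.

Lemma img_evec j l : img (evec j) l = a j l.
Proof.
rewrite ffunE (bigD1 j) //= ffunE eqxx mul1n big1 ?addn0 // => i /negbTE ij.
by rewrite ffunE ij.
Qed.

Lemma img_mscale c x l : img (mscale c x) l = (c * img x l)%N.
Proof. by rewrite !ffunE big_distrr; apply: eq_bigr => i _; rewrite ffunE -mulnA. Qed.

Lemma img_dirmon l c j l' : img (dirmon l c j) l' = (c * a l l' + a j l')%N.
Proof. by rewrite imgD img_mscale !img_evec. Qed.

Lemma img_ge (g : mon n) i l : (g i * a i l <= img g l)%N.
Proof. by rewrite ffunE (bigD1 i) //= leq_addr. Qed.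

Lemma img_mdiv (g : mon n) i l : (0 < g i)%N -> img g l = (img (mdiv g i) l + a i l)%N.
Proof. by move=> gi; rewrite -{1}(madd_mdiv gi) imgD img_evec. Qed.

End ExponentMap.

Section FibreSums.
Variables (k : fieldType) (n m : nat) (a : 'I_n -> mon m).
Local Notation img := (img a).

Lemma mcoef_monmap (f : mpol k n) b :
  mcoef (monmap a f) b = \sum_(x <- f | img x.2 == b) x.1.
Proof. by rewrite /mcoef big_map. Qed.

Lemma mcoef_mpsum r (h : 'I_r -> mpol k n) al :
  mcoef (mpsum h) al = \sum_(i < r) mcoef (h i) al.
Proof. by rewrite /mcoef /mpsum big_flatten /= big_map big_enum. Qed.

Lemma mcoef_mpmul (h g : mpol k n) al :
  mcoef (mpmul h g) al =
  \sum_(x <- h) \sum_(y <- g | madd x.2 y.2 == al) x.1 * y.1.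
Proof.
rewrite /mcoef /mpmul big_mkcond big_allpairs_dep /=; apply: eq_bigr => x _.
by rewrite [RHS]big_mkcond.
Qed.

Definition saturated (P : pred (mon n)) :=
  forall x y, P y -> img x = img y -> P x.

(* The coefficients of an element of I_A sum to zero on every fibre of img;
   hence so does any sum over a saturated set, with weights constant on fibres. *)
Lemma saturated_wsum_eq0 (f : mpol k n) (P : pred (mon n)) (W : mon n -> k) :
  inIA a f -> saturated P -> (forall x y, P y -> img x = img y -> W x = W y) ->
  \sum_(x <- f | P x.2) x.1 * W x.2 = 0.
Proof.
move=> Hf satP WP.
apply: (@sum_vanish k _ _ f (fun x : k * mon n => P x.2) (fun x => img x.2)
  (fun x => x.1 * W x.2)).
move=> y _ Py; rewrite (eq_bigl (fun x : k * mon n => img x.2 == img y.2)); last first.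
  by move=> x; apply/andP/idP => [[]//|/eqP Ex]; split; [exact: satP Py Ex|apply/eqP].
rewrite (eq_bigr (fun x => x.1 * W y.2)); last by move=> x /eqP /(WP _ _ Py) ->.
by rewrite -big_distrl /= -mcoef_monmap Hf mul0r.
Qed.

Lemma saturated_sum_eq0 (f : mpol k n) (P : pred (mon n)) :
  inIA a f -> saturated P -> \sum_(x <- f | P x.2) x.1 = 0.
Proof.
move=> Hf satP; rewrite -[RHS](saturated_wsum_eq0 (W := fun _ => 1) Hf satP) //.
by under [RHS]eq_bigr do rewrite mulr1.
Qed.

Definition binom (al be : mon n) : mpol k n := [:: (1, al); (-1, be)].

Lemma mcoef_binom al be g : mcoef (binom al be) g = (al == g)%:R - (be == g)%:R.
Proof.
rewrite /mcoef !big_cons big_nil /=.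
by case: eqP; case: eqP => _ _; rewrite ?addr0 ?subr0 ?add0r ?sub0r ?subrr.
Qed.

Lemma binom_inIA al be : img be = img al -> inIA a (binom al be).
Proof.
move=> E b; rewrite mcoef_monmap /binom !big_cons big_nil /= E.
by case: eqP => _; rewrite ?addr0 ?subrr.
Qed.

End FibreSums.

Lemma inIA_fibres (k : fieldType) n m m' (a : 'I_n -> mon m) (b : 'I_n -> mon m') :
  (forall x y, img a x = img a y -> img b x = img b y) ->
  forall f : mpol k n, inIA a f -> inIA b f.
Proof.
move=> ab f Hf be; rewrite mcoef_monmap.
apply: (saturated_sum_eq0 (P := fun x => img b x == be) Hf).
by move=> x y /eqP <- /ab ->.
Qed.

Section SimplicialData.
Variables (k : fieldType) (n m : nat) (a : 'I_n -> mon m) (d : nat).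
Hypotheses (d_gt0 : (0 < d)%N) (a_inj : injective a)
  (a_deg : forall i, (\sum_(l < m) a i l)%N = d)
  (a_vertex : forall (i : 'I_n) (l : 'I_m), val i = val l ->
      forall l', a i l' = if l' == l then d else 0%N).
Local Notation img := (img a).

Lemma img_total g : (\sum_(l < m) img g l = d * \sum_(i < n) g i)%N.
Proof.
under eq_bigr do rewrite ffunE.
rewrite exchange_big big_distrr; apply: eq_bigr => i _.
by rewrite -big_distrr /= a_deg mulnC.
Qed.

Lemma a_vertex_lt (l j : 'I_n) (lm : 'I_m) : val l = val lm -> j != l -> (a j lm < d)%N.
Proof.
move=> vl jl; rewrite ltn_neqAle; apply/andP; split; last first.
  by rewrite -(a_deg j) (bigD1 lm) //= leq_addr.
apply/eqP => E; case/eqP: jl; apply: a_inj; apply/ffunP => l'.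
rewrite (a_vertex vl); case: eqP => [->//|/eqP ne].
have := a_deg j; rewrite (bigD1 lm) //= E (bigD1 l') /=; last by rewrite ne.
by move/eqP; rewrite -{2}[d]addn0 eqn_add2l addn_eq0 => /andP[/eqP].
Qed.

Lemma nonvertex_off (lv i : 'I_n) (lm : 'I_m) : val lv = val lm -> i != lv ->
  exists2 l', l' != lm & (0 < a i l')%N.
Proof.
move=> vl ilv; have lt := a_vertex_lt vl ilv.
have : (\sum_(l' | l' != lm) a i l' != 0)%N.
  move: (a_deg i) lt; rewrite (bigD1 lm) //= => <-.
  by rewrite -{1}[a i lm]addn0 ltn_add2l lt0n.
by rewrite sum_nat_eq0 => /forall_inPn [l' l'lm ail']; exists l'; rewrite ?lt0n.
Qed.

Lemma fibre_vertex (lv : 'I_n) (lm : 'I_m) c g : val lv = val lm ->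
  img g = img (mscale c (evec lv)) -> g = mscale c (evec lv).
Proof.
move=> vl E.
have off i : i != lv -> g i = 0%N.
  move=> ilv; have [l' l'lm ail'] := nonvertex_off vl ilv.
  have := img_ge a g i l'; rewrite E img_mscale img_evec (a_vertex vl) (negbTE l'lm).
  by rewrite muln0 leqn0 muln_eq0 (gtn_eqF ail') orbF => /eqP.
have glv : g lv = c.
  move/(congr1 (fun f : mon m => f lm)): E.
  rewrite img_mscale img_evec ffunE (bigD1 lv) //= big1 ?addn0; last by move=> i /off ->.
  by rewrite (a_vertex vl) eqxx => /eqP; rewrite eqn_mul2r (gtn_eqF d_gt0) => /eqP.
apply/ffunP => i; rewrite !ffunE.
by case: (eqVneq i lv) => [->|/off ->]; rewrite ?muln1 ?muln0.
Qed.

Lemma fibre_evec j (g : mon n) : img g = a j -> g = evec j.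
Proof.
move=> E.
have g1 : (\sum_(i < n) g i = 1)%N.
  by apply/eqP; rewrite -(eqn_pmul2l d_gt0) muln1 -img_total E a_deg.
have [i gi] : exists i, (0 < g i)%N.
  by apply: mon_support; apply: contra_eq_neq g1 => ->; rewrite big1 // => i; rewrite ffunE.
have off x : x != i -> g x = 0%N.
  move=> xi; move: g1; rewrite (bigD1 i) //= (bigD1 x) //=.
  by case: (g x) => // q; case: (g i) gi => // q'; rewrite !addSn addnS.
have ge : g = evec i.
  apply/ffunP => x; rewrite ffunE; case: (eqVneq x i) => [->|/off //].
  by move: g1; rewrite (bigD1 i) //= big1 ?addn0 // => x' /off.
suff ij : i = j by rewrite ge ij.
by apply: a_inj; rewrite -E ge; apply/ffunP => l; rewrite img_evec.
Qed.

Definition isolated (al : mon n) :=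
  forall g, img g = img al -> g <> al -> forall i, (0 < g i)%N -> al i = 0%N.

Lemma isolated_coef (al : mon n) (h g : mpol k n) : isolated al -> inIA a g ->
  mcoef (mpmul h g) al = mcoef h mon0 * mcoef g al.
Proof.
move=> iso_al Hg; rewrite mcoef_mpmul /mcoef big_distrl /= (bigID (fun x => x.2 == mon0)) /=.
rewrite [X in _ + X]big1 ?addr0; last first.
  move=> x /mon_support [i xi]; rewrite -big_distrr /=.
  suff -> : \sum_(y <- g | madd x.2 y.2 == al) y.1 = 0 by rewrite mulr0.
  apply: (saturated_sum_eq0 (P := fun y => madd x.2 y == al) Hg) => y y' /eqP xy' E.
  case: (eqVneq (madd x.2 y) al) => // /eqP ne; exfalso.
  have Eimg : img (madd x.2 y) = img al by apply/ffunP => l; rewrite -xy' !imgD E.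
  have := iso_al _ Eimg ne i; rewrite ffunE (ltn_addr _ xi) -xy' ffunE => /(_ isT) /eqP.
  by rewrite addn_eq0 (gtn_eqF xi).
rewrite big_seq_cond [RHS]big_seq_cond; apply: eq_bigr => x /andP[_ /eqP ->].
rewrite big_distrr /=; apply: eq_bigl => y; congr (_ == _).
by apply/ffunP => i; rewrite !ffunE.
Qed.

(* Binomials x^(al t) - x^(be t) with isolated x^(al t) in pairwise distinct
   fibres can only be generated by at least as many polynomials: writing them
   in terms of generators g_i yields a factorisation 1 = H G of the identity
   matrix, with H_ti the constant coefficients and G_is = coef of x^(al s) in g_i. *)
Lemma generators_lb (I : finType) (al : I -> mon n) :
  (forall t, exists2 be, img be = img (al t) & be != al t) ->
  injective (fun t => img (al t)) -> (forall t, isolated (al t)) ->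
  forall r (g : 'I_r -> mpol k n), generates_IA a g -> (#|I| <= r)%N.
Proof.
move=> nontriv inj_al iso_al r g [Hg gen].
have [be Ebe nbe] := fin_all_exists2 nontriv.
have [h Hh] := fin_all_exists (fun t => gen _ (binom_inIA k (Ebe t))).
pose H := \matrix_(t < #|I|, i < r) mcoef (h (enum_val t) i) mon0.
pose G := \matrix_(i < r, s < #|I|) mcoef (g i) (al (enum_val s)).
suff HG : H *m G = 1%:M by rewrite -(mxrank1 k #|I|) -HG mulmx_max_rank.
apply/matrixP => t s; rewrite !mxE.
under eq_bigr do rewrite !mxE -isolated_coef //.
rewrite -mcoef_mpsum -Hh mcoef_binom.
case: (eqVneq t s) => [->|ts]; first by rewrite eqxx (negbTE (nbe _)) subr0.
have ne_img : img (al (enum_val t)) != img (al (enum_val s)).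
  by apply: contra_neq _ ts => /inj_al /enum_val_inj.
have nal : al (enum_val t) != al (enum_val s) by apply: contra_neq ne_img => ->.
have nbe' : be (enum_val t) != al (enum_val s).
  by apply: contra_neq ne_img => <-; rewrite Ebe.
by rewrite (negbTE nal) (negbTE nbe') subrr.
Qed.

Section VertexPoint.
Variables (lv : 'I_n) (lm : 'I_m).
Hypothesis lv_lm : val lv = val lm.

Definition vertex_pt (i : 'I_n) : k := (i == lv)%:R.

Lemma vertex_pt_mon (g : mon n) :
  \prod_(i < n) vertex_pt i ^+ g i = (g == mscale (g lv) (evec lv))%:R.
Proof.
case: eqP => [E|NE].
  rewrite big1 // => i _; rewrite /vertex_pt; case: (eqVneq i lv) => [_|il].
    by rewrite expr1n.
  by rewrite E !ffunE (negbTE il) muln0 expr0.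
have [i /andP[il gi]] : exists i, (i != lv) && (0 < g i)%N.
  case: (pickP (fun i => (i != lv) && (0 < g i)%N)) => [i Hi|off]; first by exists i.
  case: NE; apply/ffunP => i; rewrite !ffunE.
  case: (eqVneq i lv) => [->|il]; first by rewrite muln1.
  by move: (off i); rewrite /= il /= muln0 lt0n => /negbT; rewrite negbK => /eqP.
by rewrite (bigD1 i) //= /vertex_pt (negbTE il) expr0n (gtn_eqF gi) mul0r.
Qed.

(* Elements of I_A vanish on the powers of x_lv, even with weights: each
   power x_lv^c is alone in its fibre. *)
Lemma vertex_wsum_eq0 (f : mpol k n) (w : nat -> k) : inIA a f ->
  \sum_(x <- f | x.2 == mscale (x.2 lv) (evec lv)) x.1 * w (x.2 lv) = 0.
Proof.
move=> Hf.
have fib (x y : mon n) : y == mscale (y lv) (evec lv) -> img x = img y -> x = y.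
  move=> /eqP Py E; rewrite Py; apply: (fibre_vertex lv_lm); by rewrite -Py.
apply: (saturated_wsum_eq0 (P := fun g => g == mscale (g lv) (evec lv))
                           (W := fun g => w (g lv)) Hf).
  by move=> x y Py /(fib _ _ Py) ->.
by move=> x y Py /(fib _ _ Py) ->.
Qed.

Lemma vertex_pt_inV : inV a vertex_pt.
Proof.
split; first by exists lv; rewrite /vertex_pt eqxx oner_neq0.
move=> f Hf; rewrite /mpeval -[RHS](vertex_wsum_eq0 (fun _ => 1) Hf) [RHS]big_mkcond /=.
by apply: eq_bigr => x _; rewrite vertex_pt_mon; case: ifP; rewrite ?mulr1 ?mulr0.
Qed.

Lemma eval_deriv_vertex j (f : mpol k n) : mpeval vertex_pt (mpderiv j f) =
  \sum_(x <- f | mdiv x.2 j == mscale (mdiv x.2 j lv) (evec lv)) x.1 *+ x.2 j.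
Proof.
rewrite /mpeval big_map [RHS]big_mkcond; apply: eq_bigr => x _ /=.
have -> : [ffun i => if i == j then (x.2 i).-1 else x.2 i] = mdiv x.2 j.
  by apply/ffunP => i; rewrite !ffunE; case: eqP; rewrite ?subn1 ?subn0.
by rewrite vertex_pt_mon; case: ifP; rewrite ?mulr1 ?mulr0.
Qed.

Lemma vertex_col_eq0 (f : mpol k n) : inIA a f -> mpeval vertex_pt (mpderiv lv f) = 0.
Proof.
move=> Hf; rewrite eval_deriv_vertex -[RHS](vertex_wsum_eq0 (fun c => c%:R) Hf).
rewrite [RHS]big_mkcond [LHS]big_mkcond; apply: eq_bigr => x _ /=.
case: (posnP (x.2 lv)) => [E0|xp]; first by rewrite E0 mulr0n mulr0 !if_same.
by rewrite mdiv_ray_self // mulr_natr.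
Qed.

Definition singular_dir j :=
  exists c g, img g = img (dirmon lv c j) /\ g <> dirmon lv c j.

Definition singular_dirs : {set 'I_n} := [set j | (j != lv) && classicb (singular_dir j)].

Lemma regular_col_eq0 j (f : mpol k n) : inIA a f -> j != lv -> ~ singular_dir j ->
  mpeval vertex_pt (mpderiv j f) = 0.
Proof.
move=> Hf jl reg; rewrite eval_deriv_vertex.
have fib c g : img g = img (dirmon lv c j) -> g = dirmon lv c j.
  by move=> E; case: (eqVneq g (dirmon lv c j)) => [//|/eqP ne]; case: reg; exists c, g.
transitivity (\sum_(x <- f | x.2 == dirmon lv (x.2 lv) j) x.1); last first.
  apply: (saturated_sum_eq0 (P := fun g => g == dirmon lv (g lv) j) Hf) => x y /eqP Py E.
  by rewrite Py in E; rewrite (fib _ _ E) dirmon_l ?eqxx.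
rewrite [RHS]big_mkcond [LHS]big_mkcond; apply: eq_bigr => x _ /=.
case: (posnP (x.2 j)) => [xj0|xj].
  rewrite xj0 mulr0n if_same; case: eqP => // E.
  by move: xj0; rewrite E !ffunE eqxx (negbTE jl) muln0.
rewrite mdiv_ray_dir //; case: eqP => // E.
by rewrite E !ffunE eqxx (negbTE jl) muln0.
Qed.

Lemma jacobian_vertex_support r (g : 'I_r -> mpol k n) i j : (forall i, inIA a (g i)) ->
  j \notin singular_dirs -> jacobian g vertex_pt i j = 0.
Proof.
move=> Hg; rewrite inE mxE negb_and negbK.
case: (eqVneq j lv) => [->|jl] /= reg; first exact: vertex_col_eq0.
by apply: regular_col_eq0 (Hg i) jl _ => /classicbP; apply/negP.
Qed.

Lemma singular_dirs_card : smooth_V k a -> (n - m <= #|singular_dirs|)%N.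
Proof.
move=> Hs; have [_ [r [g [Hg <-]]]] := Hs _ vertex_pt_inV.
by apply: rank_le_support => i j; exact: jacobian_vertex_support.
Qed.

End VertexPoint.

Lemma singular_fibre_off (l j : 'I_n) (lm : 'I_m) c g : val l = val lm -> j != l ->
  img g = img (dirmon l c j) -> g <> dirmon l c j -> g j = 0%N.
Proof.
move=> vl jl Eg ng; apply/eqP; rewrite -leqn0 leqNgt; apply/negP => gj; apply: ng.
have E' : img (mdiv g j) = img (mscale c (evec l)).
  apply/ffunP => l'; apply/eqP; rewrite -(eqn_add2r (a j l')) -img_mdiv // Eg.
  by rewrite img_dirmon img_mscale img_evec.
by rewrite -(madd_mdiv gj) (fibre_vertex vl E').
Qed.

(* For the least c such that the fibre of x_l^c x_j is nontrivial, the
   monomial x_l^c x_j is isolated: a fibre-mate involving x_l could be divided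
   by x_l, contradicting minimality, and none involves x_j. *)
Lemma minimal_singular (l j : 'I_n) (lm : 'I_m) : val l = val lm -> j != l ->
  singular_dir l j -> exists c, [/\ (0 < c)%N,
    exists2 be, img be = img (dirmon l c j) & be != dirmon l c j &
    isolated (dirmon l c j)].
Proof.
move=> vl jl sing.
pose P c := classicb (exists g, img g = img (dirmon l c j) /\ g <> dirmon l c j).
have exP : exists c, P c by case: sing => c [g Hg]; exists c; apply/classicbP; exists g.
case: (ex_minnP exP) => c /classicbP [be [Ebe nbe]] cmin.
have c_gt0 : (0 < c)%N.
  rewrite lt0n; apply/eqP => c0; rewrite c0 dirmon0 in Ebe nbe.
  by apply: nbe; apply: fibre_evec; apply/ffunP => l'; rewrite Ebe img_evec.
exists c; split => //; first by exists be => //; apply/eqP.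
move=> g Eg ng i gi; rewrite !ffunE.
case: (eqVneq i j) => [eij|nij]; first by rewrite eij (singular_fibre_off vl jl Eg ng) in gi.
rewrite addn0; case: (eqVneq i l) => [eil|_]; last by rewrite muln0.
exfalso; subst i.
have E' : img (mdiv g l) = img (dirmon l c.-1 j).
  apply/ffunP => l'; apply/eqP; rewrite -(eqn_add2r (a l l')) -img_mdiv // Eg.
  by rewrite -(img_evec a l) -imgD dirmonS prednK.
have : P c.-1.
  apply/classicbP; exists (mdiv g l); split => // e; apply: ng.
  by rewrite -(madd_mdiv gi) e dirmonS prednK.
by move/cmin; rewrite leqNgt ltn_predL c_gt0.
Qed.

Lemma dirmon_img_inj (l : 'I_n) c c' j j' :
  img (dirmon l c j) = img (dirmon l c' j') -> j = j'.
Proof.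
move=> E.
have ec : c = c'.
  move: (congr1 (fun f : mon m => \sum_(l0 < m) f l0)%N E).
  by rewrite /= !img_total !sum_dirmon => /eqP; rewrite eqn_pmul2l // eqn_add2r => /eqP.
subst c'; apply: a_inj; apply/ffunP => l'.
move: (congr1 (fun f : mon m => f l') E); rewrite /= !img_dirmon.
by move/eqP; rewrite eqn_add2l => /eqP.
Qed.

(* In codimension >= 2, I_A is not a complete intersection: the n - m
   singular directions at one vertex and one more at a second vertex give
   n - m + 1 binomials which force as many generators. *)
Lemma not_ici_codim2 : smooth_V k a -> (1 < m)%N -> (1 < n - m)%N -> ~ ici k a.
Proof.
move=> Hs m_gt1 codim [[gg Hgg] _].
have m_gt0 : (0 < m)%N := ltnW m_gt1.
have n_gt1 : (1 < n)%N by lia.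
pose l0 : 'I_n := Ordinal (ltnW n_gt1); pose lm0 : 'I_m := Ordinal m_gt0.
pose l1 : 'I_n := Ordinal n_gt1; pose lm1 : 'I_m := Ordinal m_gt1.
have v0 : val l0 = val lm0 by [].
have v1 : val l1 = val lm1 by [].
have [jx jxB jx_l0] : exists2 jx, jx \in singular_dirs l1 & jx != l0.
  have /card_gt1P [x [y [xB yB xy]]] : (1 < #|singular_dirs l1|)%N.
    exact: leq_trans codim (singular_dirs_card v1 Hs).
  by case: (eqVneq x l0) => [x0|]; [exists y; rewrite // -x0 eq_sym | exists x].
pose sel (t : option 'I_#|singular_dirs l0|) : 'I_n * 'I_n :=
  if t is Some u then (l0, enum_val u) else (l1, jx).
have sing t : exists c, [/\ (0 < c)%N,
    exists2 be, img be = img (dirmon (sel t).1 c (sel t).2) &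
                be != dirmon (sel t).1 c (sel t).2 &
    isolated (dirmon (sel t).1 c (sel t).2)].
  case: t => [u|] /=.
    by move: (enum_valP u); rewrite inE => /andP[jl /classicbP]; exact: minimal_singular v0 jl.
  by move: jxB; rewrite inE => /andP[jl /classicbP]; exact: minimal_singular v1 jl.
have [c Hc] := fin_all_exists sing.
have sep c0 c1 j : (0 < c0)%N -> img (dirmon l0 c0 j) != img (dirmon l1 c1 jx).
  move=> c0_gt0; apply/eqP => /(congr1 (fun f : mon m => f lm0)) /=.
  rewrite !img_dirmon (a_vertex v0) (a_vertex v1) eqxx /= muln0 add0n.
  by have := a_vertex_lt v0 jx_l0; have := leq_pmull d c0_gt0; lia.
have : (#|{: option 'I_#|singular_dirs l0|}| <= n - m)%N.
  apply: (generators_lb (al := fun t => dirmon (sel t).1 (c t) (sel t).2) _ _ _ Hgg).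
  - by move=> t; have [_ [be ? ?] _] := Hc t; exists be.
  - move=> [u|] [u'|] /= E.
    + by congr Some; apply: enum_val_inj; exact: dirmon_img_inj E.
    + have [c_gt0 _ _] := Hc (Some u).
      by move: (sep _ (c None) (enum_val u) c_gt0); rewrite E eqxx.
    + have [c_gt0 _ _] := Hc (Some u').
      by move: (sep _ (c None) (enum_val u') c_gt0); rewrite E eqxx.
    + by [].
  - by move=> t; have [_ _ iso] := Hc t.
by rewrite card_option card_ord; have := singular_dirs_card v0 Hs; lia.
Qed.

Section Hypersurface.
(* codimension one: besides the vertices there is only the apex a_m *)
Hypotheses (m_lt_n : (m < n)%N) (n_le : (n <= m.+1)%N).

Let apex : 'I_n := Ordinal m_lt_n.
Let w := a apex.
Let vtx (l : 'I_m) : 'I_n := Ordinal (ltn_trans (ltn_ord l) m_lt_n).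

Let vtx_val l : val (vtx l) = val l. Proof. by []. Qed.

Let vtx_apex l : vtx l != apex.
Proof. by apply/eqP => /(congr1 val) /= lm; move: (ltn_ord l); rewrite lm ltnn. Qed.

Let apex_vtx l : apex != vtx l. Proof. by rewrite eq_sym vtx_apex. Qed.

Let vtx_or_apex (i : 'I_n) : i != apex -> exists l, i = vtx l.
Proof.
move=> ia; have im : (nat_of_ord i < m)%N.
  have ne : nat_of_ord i <> m by move=> e; case/eqP: ia; apply/val_inj.
  by have := ltn_ord i; lia.
by exists (Ordinal im); apply: val_inj.
Qed.

Lemma img_apex_coords (g : mon n) l : img g l = (g (vtx l) * d + g apex * w l)%N.
Proof.
rewrite ffunE (bigD1 apex) //= (bigD1 (vtx l)) /=; last by rewrite vtx_apex.
rewrite big1 ?addn0; first by rewrite (a_vertex (vtx_val l)) eqxx addnC.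
move=> i /andP[ia il]; have [l' e] := vtx_or_apex ia; subst i.
rewrite (a_vertex (vtx_val l')); case: eqP => [e|]; last by rewrite muln0.
by move: il; rewrite e eqxx.
Qed.

(* A singular direction at each vertex l exists; it cannot be the apex, so it
   is another vertex kk, which forces w kk to divide d and w to be supported
   on {l, kk}. *)
Lemma apex_partner (l : 'I_m) : smooth_V k a ->
  exists2 kk : 'I_m, kk != l &
    (exists t, t * w kk = d)%N /\ forall l', l' != l -> l' != kk -> w l' = 0%N.
Proof.
move=> Hs; have := singular_dirs_card (vtx_val l) Hs.
have -> : (n - m = 1)%N by lia.
case/card_gt0P => j; rewrite inE => /andP[jl /classicbP [c [g [Eg ng]]]].
have gj := singular_fibre_off (vtx_val l) jl Eg ng.
have Ec l' := congr1 (fun f : mon m => f l') Eg; rewrite /= in Ec.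
case: (eqVneq j apex) => [ja|ja].
  subst j; exfalso.
  have w_off l' : l' != l -> w l' = 0%N.
    move=> l'l; move: (Ec l'); rewrite img_apex_coords img_dirmon gj mul0n addn0.
    rewrite (a_vertex (vtx_val l)) (negbTE l'l) muln0 add0n.
    case: (posnP (g (vtx l'))) => [->|gp]; first by rewrite mul0n.
    have := a_vertex_lt (vtx_val l') (apex_vtx l').
    by have := leq_pmull d gp; rewrite /w; lia.
  have := a_deg apex; rewrite (bigD1 l) //= big1 ?addn0; last by move=> l' /w_off.
  by have := a_vertex_lt (vtx_val l) (apex_vtx l) => /[swap] ->; rewrite ltnn.
have [kk e] := vtx_or_apex ja; subst j.
have kl : kk != l by apply: contraNneq jl => ->.
have Ekk := Ec kk; rewrite img_apex_coords img_dirmon gj mul0n add0n !(a_vertex (vtx_val _)) in Ekk.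
rewrite eqxx (negbTE kl) muln0 add0n in Ekk.
exists kk => //; split; first by exists (g apex).
move=> l' l'l l'k.
have ga : (0 < g apex)%N by case: (g apex) Ekk => //= E; move: d_gt0; rewrite -E.
move: (Ec l'); rewrite img_apex_coords img_dirmon !(a_vertex (vtx_val _)).
rewrite (negbTE l'l) (negbTE l'k) muln0 add0n => E.
have : (g apex * w l' = 0)%N by lia.
by move/eqP; rewrite muln_eq0 (gtn_eqF ga) => /eqP.
Qed.

(* two vertices cannot share the apex's support: the lattice is a plane *)
Lemma hypersurface_dim2 : smooth_V k a -> (1 < m)%N -> m = 2%N.
Proof.
move=> Hs m_gt1; apply/eqP; rewrite eqn_leq m_gt1 andbT leqNgt; apply/negP => m_gt2.
pose l0 : 'I_m := Ordinal (ltnW m_gt1).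
have [k0 k0l [[t0 Et0] off0]] := apex_partner l0 Hs.
have [l1 [l1l0 l1k0]] : exists l1 : 'I_m, l1 != l0 /\ l1 != k0.
  case: (eqVneq (nat_of_ord k0) 1%N) => e.
    by exists (Ordinal m_gt2); split; apply/eqP => /(congr1 val) /=; rewrite ?e.
  exists (Ordinal m_gt1); split; apply/eqP => /(congr1 val) //= e'.
  by rewrite -e' eqxx in e.
have [k1 k1l [_ off1]] := apex_partner l1 Hs.
have wk0 : (0 < w k0)%N by rewrite lt0n; apply: contraTneq d_gt0 => w0; rewrite -Et0 w0 muln0.
have k01 : k0 = k1.
  by apply/eqP; apply/negPn/negP => ne; move: wk0; rewrite off1 // eq_sym.
have := a_deg apex; rewrite (bigD1 k0) //= big1 ?addn0.
  by have := a_vertex_lt (vtx_val k0) (apex_vtx k0); rewrite /w; lia.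
move=> l' l'k; case: (eqVneq l' l0) => [->|l'l0]; last exact: off0.
by apply: off1; rewrite eq_sym -?k01.
Qed.

Lemma hypersurface_apex_balanced : smooth_V k a -> m = 2%N -> forall l l' : 'I_m, w l = w l'.
Proof.
move=> Hs m2 l l'; case: (eqVneq l l') => [->//|ll'].
have other x y (xl : x != y) : forall z : 'I_m, z != x -> z = y.
  move=> z zx; apply: val_inj => /=; move: (ltn_ord x) (ltn_ord y) (ltn_ord z).
  have : nat_of_ord z <> nat_of_ord x by move=> e; case/eqP: zx; apply: val_inj.
  have : nat_of_ord x <> nat_of_ord y by move=> e; case/eqP: xl; apply: val_inj.
  lia.
have [kk kl [[t Et] _]] := apex_partner l Hs.
have [kk' kl' [[t' Et'] _]] := apex_partner l' Hs.
have l'l : l' != l by rewrite eq_sym.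
rewrite (other _ _ ll' _ kl) in Et; rewrite (other _ _ l'l _ kl') in Et'.
have := a_deg apex; rewrite (bigD1 l) //= (bigD1 l') /=; last by rewrite l'l.
rewrite big1 ?addn0; last by move=> x /andP[xl xl']; case/eqP: xl'; exact: other _ _ ll' _ xl.
rewrite /w in Et Et' *; move: (a apex l) (a apex l') Et Et' => x y Et Et' S.
have x_pos : (0 < x)%N by rewrite lt0n; apply: contraTneq d_gt0 => x0; rewrite -Et' x0 muln0.
have y_pos : (0 < y)%N by rewrite lt0n; apply: contraTneq d_gt0 => y0; rewrite -Et y0 muln0.
have t2 : (2 <= t)%N by rewrite ltnNge; apply/negP => t1; have := leq_mul t1 (leqnn y); lia.
have t2' : (2 <= t')%N by rewrite ltnNge; apply/negP => t1; have := leq_mul t1 (leqnn x); lia.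
by have := leq_mul t2 (leqnn y); have := leq_mul t2' (leqnn x); lia.
Qed.

End Hypersurface.

End SimplicialData.

Definition i0 : 'I_3 := @Ordinal 3 0 isT.
Definition i1 : 'I_3 := @Ordinal 3 1 isT.
Definition i2 : 'I_3 := @Ordinal 3 2 isT.
Definition j0 : 'I_2 := @Ordinal 2 0 isT.
Definition j1 : 'I_2 := @Ordinal 2 1 isT.

Lemma sum3 (F : 'I_3 -> nat) : (\sum_(i < 3) F i = F i0 + F i1 + F i2)%N.
Proof.
rewrite !big_ord_recl big_ord0 addn0 addnA.
by congr (_ + _ + _); congr F; apply: val_inj.
Qed.

Lemma mon3P (x y : mon 3) : x i0 = y i0 -> x i1 = y i1 -> x i2 = y i2 -> x = y.
Proof.
move=> h0 h1 h2; apply/ffunP => -[[|[|[|//]]] Hj].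
- by rewrite (_ : Ordinal Hj = i0) //; apply: val_inj.
- by rewrite (_ : Ordinal Hj = i1) //; apply: val_inj.
- by rewrite (_ : Ordinal Hj = i2) //; apply: val_inj.
Qed.

Lemma mon2P (x y : mon 2) : x j0 = y j0 -> x j1 = y j1 -> x = y.
Proof.
move=> h0 h1; apply/ffunP => -[[|[|//]] Hj].
- by rewrite (_ : Ordinal Hj = j0) //; apply: val_inj.
- by rewrite (_ : Ordinal Hj = j1) //; apply: val_inj.
Qed.

Lemma img_curve0 (g : mon 3) : img curveB g j0 = (2 * g i0 + g i2)%N.
Proof. by rewrite ffunE sum3 !ffunE /=; lia. Qed.

Lemma img_curve1 (g : mon 3) : img curveB g j1 = (2 * g i1 + g i2)%N.
Proof. by rewrite ffunE sum3 !ffunE /=; lia. Qed.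

Section Conic.
Variable k : fieldType.

Definition conic_lhs : mon 3 := madd (evec i0) (evec i1).
Definition conic_rhs : mon 3 := mscale 2 (evec i2).
Definition conic_eq : mpol k 3 := binom k conic_lhs conic_rhs.

Lemma conic_eq_in : inIA curveB conic_eq.
Proof. by apply: binom_inIA; apply: mon2P; rewrite ?img_curve0 ?img_curve1 !ffunE. Qed.

(* Reduction modulo the quadric: x^g is congruent to its normal form
   x^(shift g K), K = floor(g_3 / 2), obtained by replacing x3^2 by x1 x2
   K times; step i of the reduction subtracts x^(shift_step g i) times the quadric. *)
Definition halfx3 (g : mon 3) := (g i2)./2.
Definition shift (g : mon 3) i : mon 3 :=
  [ffun j => if j == i2 then g j - i.*2 else g j + i]%N.
Definition shift_step (g : mon 3) i : mon 3 :=
  [ffun j => if j == i2 then g j - (i.*2 + 2) else g j + i]%N.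
Definition normal_form g := shift g (halfx3 g).

Lemma halfx3_le g : ((halfx3 g).*2 <= g i2)%N.
Proof. by rewrite /halfx3 -{2}(odd_double_half (g i2)) leq_addl. Qed.

Lemma shift_step_lhs g i : (i < halfx3 g)%N ->
  madd (shift_step g i) conic_lhs = shift g i.+1.
Proof.
move=> iK; have := halfx3_le g; rewrite -!mul2n => H.
by apply: mon3P; rewrite !ffunE /=; lia.
Qed.

Lemma shift_step_rhs g i : (i < halfx3 g)%N ->
  madd (shift_step g i) conic_rhs = shift g i.
Proof.
move=> iK; have := halfx3_le g; rewrite -!mul2n => H.
by apply: mon3P; rewrite !ffunE /=; lia.
Qed.

Lemma shift0 g : shift g 0 = g.
Proof. by apply: mon3P; rewrite !ffunE /= ?subn0 ?addn0. Qed.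

Lemma normal_form_fibre g g' : img curveB g = img curveB g' -> normal_form g = normal_form g'.
Proof.
move=> E; have := congr1 (fun f : mon 2 => f j0) E; have := congr1 (fun f : mon 2 => f j1) E.
rewrite /= !img_curve0 !img_curve1 => E1 E0.
have h := odd_double_half (g i2); have h' := odd_double_half (g' i2).
rewrite -!mul2n in h h'.
have o : (odd (g i2) <= 1)%N by case: odd.
have o' : (odd (g' i2) <= 1)%N by case: odd.
by apply: mon3P; rewrite /normal_form /halfx3 !ffunE /= -?mul2n; lia.
Qed.

Definition conic_quot (f : mpol k 3) : mpol k 3 :=
  flatten [seq [seq (- x.1, shift_step x.2 i) | i <- iota 0 (halfx3 x.2)] | x <- f].

(* f - quot(f) (x1 x2 - x3^2) is f with every monomial replaced by its normal form *)
Lemma mcoef_conic_quot (f : mpol k 3) g :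
  mcoef (mpmul (conic_quot f) conic_eq) g =
  mcoef f g - \sum_(x <- f | normal_form x.2 == g) x.1.
Proof.
rewrite mcoef_mpmul /conic_quot big_flatten /= big_map /mcoef.
rewrite [X in _ = X - _]big_mkcond [X in _ = _ - X]big_mkcond -sumrB.
apply: eq_bigr => x _; rewrite big_map.
transitivity (\sum_(0 <= i < halfx3 x.2)
    (- x.1) * ((shift x.2 i.+1 == g)%:R - (shift x.2 i == g)%:R)).
  rewrite /index_iota subn0 big_seq [RHS]big_seq; apply: eq_bigr => i.
  rewrite mem_iota add0n => /andP[_ iK].
  rewrite /conic_eq /binom big_mkcond !big_cons big_nil /= shift_step_lhs // shift_step_rhs //.
  by case: (shift x.2 i.+1 == g); case: (shift x.2 i == g); rewrite /=; ring.
rewrite -big_distrr /= telescope_sumr // shift0 /normal_form.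
by case: (x.2 == g); case: (shift x.2 (halfx3 x.2) == g); rewrite /=; ring.
Qed.

Lemma conic_ici : ici k curveB.
Proof.
split.
  exists (fun _ => conic_eq); split=> [_|f Hf]; first exact: conic_eq_in.
  exists (fun _ => conic_quot f) => g; rewrite mcoef_mpsum big_ord1 mcoef_conic_quot.
  suff -> : \sum_(x <- f | normal_form x.2 == g) x.1 = 0 by rewrite subr0.
  apply: (saturated_sum_eq0 (P := fun x => normal_form x == g) Hf).
  by move=> x y /eqP <- /normal_form_fibre ->.
move=> r g [_ gen]; rewrite lt0n; apply/eqP => r0; subst r.
have [h Hh] := gen _ conic_eq_in.
move: (Hh conic_lhs); rewrite mcoef_mpsum big_ord0 mcoef_binom eqxx.
have -> : (conic_rhs == conic_lhs) = false.
  by apply/negbTE/eqP => /(congr1 (fun f : mon 3 => f i2)); rewrite !ffunE.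
by rewrite subr0 => /eqP; rewrite oner_eq0.
Qed.

End Conic.

Lemma inIA_scaled_conic (k : fieldType) (a : 'I_3 -> mon 2) s :
  (0 < s)%N -> (forall i l, a i l = s * curveB i l)%N ->
  forall f : mpol k 3, inIA a f <-> inIA curveB f.
Proof.
move=> s_gt0 Ha f.
have img_a g : img a g = mscale s (img curveB g).
  apply/ffunP => l; rewrite !ffunE big_distrr; apply: eq_bigr => i _.
  by rewrite Ha mulnCA.
split; apply: inIA_fibres => x y; rewrite !img_a.
- move=> E; apply/ffunP => l; move: (congr1 (fun f : mon 2 => f l) E); rewrite !ffunE.
  by move/eqP; rewrite eqn_pmul2l // => /eqP.
- by move=> ->.
Qed.

Section SameIdeal.
Variables (k : fieldType) (n m : nat) (a b : 'I_n -> mon m).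
Hypothesis same_ideal : forall f : mpol k n, inIA a f <-> inIA b f.

Lemma generates_IA_ext r (g : 'I_r -> mpol k n) : generates_IA a g -> generates_IA b g.
Proof. by case=> Hg gen; split=> [i|f /same_ideal]; [apply/same_ideal | exact: gen]. Qed.

Lemma inV_ext p : inV (k := k) a p -> inV b p.
Proof. by case=> p_nz p_zero; split=> // f /same_ideal; exact: p_zero. Qed.

End SameIdeal.

Lemma ici_ext (k : fieldType) n m (a b : 'I_n -> mon m) :
  (forall f : mpol k n, inIA a f <-> inIA b f) -> ici k a -> ici k b.
Proof.
move=> ab [[g Hg] gen_min]; split; first by exists g; exact: generates_IA_ext Hg.
by move=> r g' /(generates_IA_ext (fun f => iff_sym (ab f))); exact: gen_min.
Qed.

Lemma simplicial_deg n m (a : 'I_n -> mon m) d :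
  (forall (i : 'I_n) (l : 'I_m), val i = val l ->
      forall l', a i l' = if l' == l then d else 0%N) ->
  (forall i : 'I_n, (m <= i)%N -> (\sum_(l < m) a i l)%N = d) ->
  forall i, (\sum_(l < m) a i l)%N = d.
Proof.
move=> a_vertex a_deg i; case: (leqP m i) => [mi|im]; first exact: a_deg.
pose lm : 'I_m := Ordinal im.
rewrite (bigD1 lm) //= (a_vertex i lm erefl) eqxx big1 ?addn0 // => l /negbTE.
by rewrite (a_vertex i lm erefl) => ->.
Qed.

(* The torus has dimension m >= 2: for m <= 1 the a_i could not be
   distinct, nonzero and of equal degree. *)
Lemma simplicial_dim_ge2 n m (a : 'I_n -> mon m) d : (m < n)%N -> injective a ->
  (forall i, a i != [ffun => 0%N]) -> (forall i, (\sum_(l < m) a i l)%N = d) -> (1 < m)%N.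
Proof.
move=> mn a_inj a_nz a_deg; have n_gt0 : (0 < n)%N by lia.
case: m a mn a_inj a_nz a_deg => [|[|m']] a mn a_inj a_nz a_deg //.
  by case/negP: (a_nz (Ordinal n_gt0)); apply/eqP/ffunP => -[].
have n_gt1 : (1 < n)%N by lia.
suff : Ordinal n_gt0 = Ordinal n_gt1 by move/(congr1 val).
apply: a_inj; apply/ffunP => l; rewrite (ord1 l).
by have := a_deg (Ordinal n_gt0); have := a_deg (Ordinal n_gt1); rewrite !big_ord1 => -> ->.
Qed.

Lemma hypersurface_conic (k : fieldType) n m (a : 'I_n -> mon m) d :
  (0 < d)%N -> injective a -> (forall i, (\sum_(l < m) a i l)%N = d) ->
  (forall (i : 'I_n) (l : 'I_m), val i = val l ->
      forall l', a i l' = if l' == l then d else 0%N) ->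
  (1 < m)%N -> smooth_V k a -> n = m.+1 ->
  ici k a /\ exists sigma : 'I_n -> 'I_3, bijective sigma /\
     forall p : 'I_3 -> k, inV curveB p <-> inV a (fun i => p (sigma i)).
Proof.
move=> d_gt0 a_inj a_deg a_vertex m_gt1 Hs n_eq.
have mn : (m < n)%N by rewrite n_eq.
have n_le : (n <= m.+1)%N by rewrite n_eq.
have m2 := hypersurface_dim2 d_gt0 a_inj a_deg a_vertex mn n_le Hs m_gt1.
have bal := hypersurface_apex_balanced d_gt0 a_inj a_deg a_vertex mn n_le Hs m2.
subst n m; pose s := a (Ordinal mn) j0.
have ds : d = (s + s)%N.
  rewrite -(a_deg (Ordinal mn)) !big_ord_recl big_ord0 addn0.
  by congr (_ + _); apply: bal.
have Ha i l : a i l = (s * curveB i l)%N.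
  case: i l => [[|[|[|//]]] Hi] [[|[|//]] Hl]; rewrite ffunE /=.
  - by rewrite (a_vertex _ j0) //=; lia.
  - by rewrite (a_vertex _ j0) //=; lia.
  - by rewrite (a_vertex _ j1) //=; lia.
  - by rewrite (a_vertex _ j1) //=; lia.
  - by rewrite muln1 (_ : Ordinal Hi = Ordinal mn); [apply: bal | apply: val_inj].
  - by rewrite muln1 (_ : Ordinal Hi = Ordinal mn); [apply: bal | apply: val_inj].
have s_gt0 : (0 < s)%N by lia.
have same f := inIA_scaled_conic (k := k) s_gt0 Ha f.
split; first exact: ici_ext (fun f => iff_sym (same f)) (conic_ici k).
exists id; split=> [|p]; first by exists id.
by split; apply: inV_ext => f; [exact: iff_sym (same f) | exact: same f].
Qed.

Theorem mainTheorem13 (k : closedFieldType) (n m : nat) (a : 'I_n -> mon m) :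
  simplicial_proj_toric_data a ->
  smooth_V k a ->
  (ici k a <->
   exists sigma : 'I_n -> 'I_3, bijective sigma /\
     forall p : 'I_3 -> k, inV (k:=k) curveB p <-> inV (k:=k) a (fun i => p (sigma i))).
Proof.
move=> [mn a_inj a_nz [d [d_gt0 a_vertex a_deg_apex]]] Hs.
have a_deg := simplicial_deg a_vertex a_deg_apex.
have m_gt1 := simplicial_dim_ge2 mn a_inj a_nz a_deg.
have conic := hypersurface_conic d_gt0 a_inj a_deg a_vertex m_gt1 Hs.
split=> [Hici | [sigma [sigma_bij _]]].
-
  apply: (conic _).2; suff : ~ (1 < n - m)%N by lia.
  by move=> codim; exact: not_ici_codim2 d_gt0 a_inj a_deg a_vertex Hs m_gt1 codim Hici.
-
  have n3 : n = 3%N by rewrite -(card_ord n) -(card_ord 3); exact: bij_eq_card sigma_bij.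
  by apply: (conic _).1; lia.
Qed.
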